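(* Let $\|\cdot\|$ be a norm on $\mathbb{R}^n$ whose dual norm $\|\cdot\|^*$ is an algebra norm. Let $a<b$ and let $f\in\mathbb{R}^n$ take values in $[a,b]$. Let $\eta:\mathbb{R}_+\to\mathbb{R}_+$ be a positive decreasing function and let $\epsilon>0$. Then there is a constant $C_0$, depending on $\eta$ and $\epsilon$ only, such that $f$ can be written as $f=f_1+f_2+f_3$ with $\|f_1\|^*\le C_0$, $\|f_2\|\le\eta(\|f_1\|^* )$ and $\|f_3\|_2\le\epsilon$, and such that both $f_1$ and $f_1+f_3$ take values in $[a,b]$.
   Context: Functions in $\mathbb{R}^n$ are functions on $\{1,\dots,n\}$, with $\langle f,g\rangle=\frac1n\sum_xf(x)g(x)$ and $\|f\|_2=(\frac1n\sum_x f(x)^2)^{1/2}$. The dual norm of $\|\cdot\|$ is $\|\phi\|^*=\max\{\langle f,\phi\rangle:\|f\|\le1\}$. An algebra norm on $\mathbb{R}^n$ is a norm $|\cdot|$ such that $|fg|\le|f||g|$ for all $f,g$ (pointwise product) and $|\mathbf 1|=1$, where $\mathbf 1$ is the constant function $1$. *)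

From HB Require Import structures.
From mathcomp Require Import all_boot all_order all_algebra.
From mathcomp Require Import classical_sets reals.
Set Implicit Arguments. Unset Strict Implicit. Unset Printing Implicit Defensive.
Import Order.TTheory GRing.Theory Num.Theory.
Local Open Scope ring_scope.
Local Open Scope classical_set_scope.

Definition vec (R : realType) (n : nat) := {ffun 'I_n -> R}.

Section Defs.
Variables (R : realType) (n : nat).

Definition inner (f g : vec R n) : R := n%:R^-1 * \sum_(i < n) f i * g i.

Definition l2norm (f : vec R n) : R := Num.sqrt (inner f f).

Definition vadd (f g : vec R n) : vec R n := [ffun i => f i + g i].
Definition vscale (c : R) (f : vec R n) : vec R n := [ffun i => c * f i].
Definition vmul (f g : vec R n) : vec R n := [ffun i => f i * g i].
Definition vone : vec R n := [ffun _ => 1].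
Definition vzero : vec R n := [ffun _ => 0].

Definition is_norm (N : vec R n -> R) : Prop :=
  [/\ forall f, 0 <= N f,
      forall f, N f = 0 -> f = vzero,
      forall c f, N (vscale c f) = `|c| * N f
    & forall f g, N (vadd f g) <= N f + N g].

(* dual norm: ||phi||^* = max { <f,phi> : ||f|| <= 1 } (the max is a sup) *)
Definition dual_norm (N : vec R n -> R) (phi : vec R n) : R :=
  sup [set inner f phi | f in [set f | N f <= 1]].

Definition is_algebra_norm (M : vec R n -> R) : Prop :=
  [/\ is_norm M, forall f g, M (vmul f g) <= M f * M g & M vone = 1].

Definition takes_values_in (a b : R) (f : vec R n) : Prop :=
  forall i, a <= f i <= b.

End Defs.

From HB Require Import structures.
From mathcomp Require Import all_boot all_order all_algebra.
From mathcomp Require Import classical_sets reals.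
From mathcomp Require Import boolp ring lra.
Import Order.TTheory GRing.Theory Num.Theory.
Local Open Scope ring_scope.
Set Implicit Arguments. Unset Strict Implicit. Unset Printing Implicit Defensive.

(* Let G be the primitive of the clamp to [a, b] and M the dual norm. For a
   cost d > 0, near-minimise over potentials psi the convex functional
     mean (G (psi i) - f i * psi i) + d * M psi.
   Its smooth part has gradient clamp psi - f, so by duality (N is the dual of M) a
   near-minimiser has N (f - clamp psi) = O(d), while M psi = O(1/d). As M is an algebra
   norm, a polynomial approximation f1 of clamp psi with values in [a, b] has M f1 bounded in
   terms of d alone. Along a decreasing sequence of costs adapted to eta the minimal values
   can drop by a bounded total amount only, so two consecutive ones are close; strong
   convexity then makes the corresponding clamps close in L2. *)

HB.instance Definition _ (R : realType) (n : nat) :=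
  GRing.Lmodule.copy (vec R n) {ffun 'I_n -> R^o}.

(** * Averages, inner product and norms on [vec R n] *)

Section Mean.
Variables (R : realType) (n : nat).
Implicit Types (F G : 'I_n -> R) (f g h : vec R n).

Definition mean F : R := n%:R^-1 * \sum_(i < n) F i.

Lemma eq_mean F G : (forall i, F i = G i) -> mean F = mean G.
Proof. by move=> FG; congr (_ * _); apply: eq_bigr. Qed.

Lemma ler_mean F G : (forall i, F i <= G i) -> mean F <= mean G.
Proof. by move=> FG; rewrite ler_wpM2l ?invr_ge0 ?ler0n // ler_sum. Qed.

Lemma meanD F G : mean (fun i => F i + G i) = mean F + mean G.
Proof. by rewrite /mean big_split mulrDr. Qed.

Lemma meanB F G : mean (fun i => F i - G i) = mean F - mean G.
Proof. by rewrite /mean sumrB mulrBr. Qed.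

Lemma meanZ c F : mean (fun i => c * F i) = c * mean F.
Proof. by rewrite /mean -mulr_sumr mulrCA. Qed.

Lemma mean_cst c : (0 < n)%N -> mean (fun=> c) = c.
Proof.
move=> n_gt0; rewrite /mean sumr_const card_ord -[c *+ n]mulr_natl mulrA mulVf ?mul1r //.
by rewrite pnatr_eq0 -lt0n.
Qed.

Lemma vecDE f g i : (f + g) i = f i + g i. Proof. by rewrite ffunE. Qed.
Lemma vecBE f g i : (f - g) i = f i - g i. Proof. by rewrite !ffunE. Qed.
Lemma vecZE c f i : (c *: f) i = c * f i. Proof. by rewrite ffunE. Qed.

Lemma innerE f g : inner f g = mean (fun i => f i * g i).
Proof. by []. Qed.

Lemma innerC f g : inner f g = inner g f.
Proof. by rewrite !innerE; apply: eq_mean => i; rewrite mulrC. Qed.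

Lemma innerDl f g h : inner (f + g) h = inner f h + inner g h.
Proof. by rewrite !innerE -meanD; apply: eq_mean => i; rewrite !ffunE mulrDl. Qed.

Lemma innerZl c f g : inner (c *: f) g = c * inner f g.
Proof. by rewrite !innerE -meanZ; apply: eq_mean => i; rewrite !ffunE mulrA. Qed.

Lemma innerNl f g : inner (- f) g = - inner f g.
Proof. by rewrite -scaleN1r innerZl mulN1r. Qed.

Lemma innerBl f g h : inner (f - g) h = inner f h - inner g h.
Proof. by rewrite innerDl innerNl. Qed.

Lemma innerZr c f g : inner g (c *: f) = c * inner g f.
Proof. by rewrite !(innerC g) innerZl. Qed.

Lemma innerBr f g h : inner h (f - g) = inner h f - inner h g.
Proof. by rewrite !(innerC h) innerBl. Qed.

Lemma inner_self_subZ f g c :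
  inner (f - c *: g) (f - c *: g) = inner f f - 2 * c * inner f g + c ^+ 2 * inner g g.
Proof. by rewrite innerBl !innerBr !innerZl !innerZr (innerC g f); ring. Qed.

Lemma inner0r f : inner f 0 = 0.
Proof. by rewrite -(scale0r 0) innerZr mul0r. Qed.

Lemma inner_self_ge0 f : 0 <= inner f f.
Proof.
rewrite innerE mulr_ge0 ?invr_ge0 ?ler0n // sumr_ge0 // => i _.
by rewrite -expr2 sqr_ge0.
Qed.

Lemma inner_self_subr_le f g :
  inner (f - g) (f - g) <= 2 * inner f f + 2 * inner g g.
Proof.
rewrite !innerE -!meanZ -meanD; apply: ler_mean => i; rewrite vecBE.
by have := sqr_ge0 (f i + g i); nra.
Qed.

End Mean.

Section NormFacts.
Variables (R : realType) (n : nat) (P : vec R n -> R).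
Hypothesis normP : is_norm P.
Implicit Types (f g : vec R n).

Lemma normv_ge0 f : 0 <= P f. Proof. by case: normP. Qed.
Lemma normv_eq0 f : P f = 0 -> f = 0. Proof. by case: normP => _ P_eq0 _ _; apply: P_eq0. Qed.
Lemma normvZ c f : P (c *: f) = `|c| * P f. Proof. by case: normP => _ _ PZ _; exact: PZ. Qed.
Lemma normvD f g : P (f + g) <= P f + P g. Proof. by case: normP => _ _ _ PD; exact: PD. Qed.

Lemma normv0 : P 0 = 0.
Proof. by rewrite -(scale0r 0) normvZ normr0 mul0r. Qed.

Lemma normvN f : P (- f) = P f.
Proof. by rewrite -scaleN1r normvZ normrN1 mul1r. Qed.

Lemma normvB f g : P (f - g) <= P f + P g.
Proof. by rewrite -(normvN g) normvD. Qed.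

Lemma normv_lerB f g : P f - P g <= P (f - g).
Proof. by rewrite lerBlDr -{1}(subrK g f) normvD. Qed.

Lemma normv_gt0 f : f != 0 -> 0 < P f.
Proof. by move=> f0; rewrite lt_def normv_ge0 andbT; apply: contra f0 => /eqP/normv_eq0->. Qed.

Lemma normv_sum (I : finType) (F : I -> vec R n) :
  P (\sum_(i : I) F i) <= \sum_(i : I) P (F i).
Proof.
apply: (big_rec2 (fun x y => P x <= y)); first by rewrite normv0.
by move=> i y1 y2 _ IH; rewrite (le_trans (normvD _ _)) // lerD2l.
Qed.

End NormFacts.

(** * Duality *)

Section Projection.
Variables (R : realType) (n : nat).
Implicit Types (p q y z : vec R n).

Lemma approx_projection (C : set (vec R n)) (W e : R) p :
  (C !=set0)%classic ->
  (forall y z s, C y -> C z -> 0 <= s <= 1 -> C ((1 - s) *: y + s *: z)) ->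
  (forall y z, C y -> C z -> inner (y - z) (y - z) <= W) -> 0 < e ->
  exists2 q, C q & forall y, C y -> inner (p - q) (y - q) <= e.
Proof.
move=> [y0 Cy0] convC diamC e_gt0.
set dist2 := [set inner (p - y) (p - y) | y in C]%classic.
have W_ge0 : 0 <= W by apply: le_trans (diamC _ _ Cy0 Cy0); exact: inner_self_ge0.
(* the step [s] toward [y] is small enough for the quadratic term to cost at most [s e] *)
set s := e / (W + e).
have s_gt0 : 0 < s by rewrite divr_gt0 // ltr_wpDl.
have s_le1 : s <= 1 by rewrite ler_pdivrMr ?mul1r ?lerDr // ltr_wpDl.
have sW_le : s * W <= e by rewrite /s mulrAC ler_pdivrMr ?ltr_wpDl //; nra.
have dist2_inf : has_inf dist2.
  split; first by exists (inner (p - y0) (p - y0)), y0.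
  by exists 0 => _ [y _ <-]; exact: inner_self_ge0.
have [_ [q Cq <-] q_near] := inf_adherent (mulr_gt0 s_gt0 e_gt0) dist2_inf.
exists q => // y Cy.
have Cz : C ((1 - s) *: q + s *: y) by apply: convC => //; rewrite (ltW s_gt0).
have : inf dist2 <= inner (p - ((1 - s) *: q + s *: y)) (p - ((1 - s) *: q + s *: y)).
  by apply: (ge_inf (proj2 dist2_inf)); exists ((1 - s) *: q + s *: y).
have -> : p - ((1 - s) *: q + s *: y) = (p - q) - s *: (y - q).
  by apply/ffunP => i; rewrite !(vecBE, vecDE, vecZE); ring.
rewrite inner_self_subZ => inf_le.
have diam := diamC _ _ Cy Cq.
have : s ^+ 2 * inner (y - q) (y - q) <= s * e.
  by rewrite expr2 -mulrA ler_wpM2l ?(ltW s_gt0) // (le_trans _ sW_le) // ler_wpM2l ?(ltW s_gt0).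
move=> sD; rewrite -(ler_pM2l s_gt0); lra.
Qed.

End Projection.

Section BasisVectors.
Variables (R : realType) (n : nat).

Definition basisv (i : 'I_n) : vec R n := [ffun j => (j == i)%:R].

Lemma basisv_neq0 i : basisv i != 0.
Proof. by apply/eqP => /ffunP /(_ i); rewrite !ffunE eqxx => /eqP; rewrite oner_eq0. Qed.

Lemma inner_basisv (f : vec R n) i : inner f (basisv i) = n%:R^-1 * f i.
Proof.
rewrite innerE /mean (bigD1 i) //= big1 ?addr0 ?ffunE ?eqxx ?mulr1 // => j ji.
by rewrite ffunE (negbTE ji) mulr0.
Qed.

Lemma basisv_expansion (y : vec R n) : y = \sum_(i < n) y i *: basisv i.
Proof.
apply/ffunP => j; rewrite sum_ffunE (bigD1 j) //= big1 => [|k kj].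
  by rewrite addr0 vecZE ffunE eqxx mulr1.
by rewrite vecZE ffunE eq_sym (negbTE kj) mulr0.
Qed.

End BasisVectors.
Arguments basisv {R n} i.
Arguments basisv_neq0 {R n} i.

Section DualNorm.
Variables (R : realType) (n : nat) (N : vec R n -> R).
Hypotheses (normN : is_norm N) (algM : is_algebra_norm (dual_norm N)).
Local Notation M := (dual_norm N).
Implicit Types (f g h y u phi : vec R n) (i : 'I_n).

Lemma dual_norm_is_norm : is_norm M. Proof. by case: algM. Qed.
Lemma dual_normM f g : M (vmul f g) <= M f * M g. Proof. by case: algM. Qed.
Lemma dual_norm1 : M (vone R n) = 1. Proof. by case: algM. Qed.

Let normM := dual_norm_is_norm.

Lemma dim_gt0 : (0 < n)%N.
Proof.
rewrite lt0n; apply/eqP => n0.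
have one0 : vone R n = 0.
  by apply/ffunP => i; exfalso; move: (nat_of_ord i) (ltn_ord i); rewrite n0.
by have := dual_norm1; rewrite one0 normv0 // => /eqP; rewrite eq_sym oner_eq0.
Qed.

(* If the set were unbounded, its [sup] would be [0] by convention, forcing [phi = 0]. *)
Lemma dual_norm_ubound phi : has_ubound [set inner f phi | f in [set f | N f <= 1]]%classic.
Proof.
apply: contrapT => unbounded.
have /(normv_eq0 normM) phi0 : M phi = 0 by apply: sup_out => -[].
by apply: unbounded; exists 0 => _ [f _ <-]; rewrite phi0 inner0r.
Qed.

Lemma inner_le_dual_norm f phi : N f <= 1 -> inner f phi <= M phi.
Proof. by move=> Nf; apply: (ub_le_sup (dual_norm_ubound phi)); exists f. Qed.

Lemma inner_le_norm_mul f phi : inner f phi <= N f * M phi.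
Proof.
have [Nf0|Nf_neq0] := eqVneq (N f) 0.
  by rewrite (normv_eq0 normN Nf0) innerC inner0r normv0 // mul0r.
have Nf_gt0 : 0 < N f by rewrite lt_def Nf_neq0 normv_ge0.
have := @inner_le_dual_norm ((N f)^-1 *: f) phi.
rewrite innerZl (normvZ normN) ger0_norm ?invr_ge0 ?(normv_ge0 normN) // mulVf // lexx.
by rewrite ler_pdivrMl // => /(_ isT).
Qed.

Lemma dual_norm_le phi c : (forall f, N f <= 1 -> inner f phi <= c) -> M phi <= c.
Proof.
move=> le_c; apply: ge_sup; last by move=> _ [f Nf <-]; exact: le_c.
by exists (inner 0 phi), 0 => //=; rewrite normv0 ?ler01.
Qed.

Lemma abs_coord_le_dual_norm phi i : `|phi i| <= M phi.
Proof.
have e_i : vmul phi (basisv i) = phi i *: basisv i.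
  by apply/ffunP => j; rewrite vecZE !ffunE; case: eqVneq => [->|_]; rewrite ?mulr1 ?mulr0.
have := dual_normM phi (basisv i).
by rewrite e_i (normvZ normM) ler_pM2r // (normv_gt0 normM (basisv_neq0 i)).
Qed.

Lemma inner_self_le_dual_norm u : inner u u <= M u ^+ 2.
Proof.
rewrite innerE -(mean_cst (M u ^+ 2) dim_gt0); apply: ler_mean => i.
rewrite -expr2 -real_normK ?num_real // lerXn2r ?nnegrE ?normr_ge0 ?(normv_ge0 normM) //.
exact: abs_coord_le_dual_norm.
Qed.

Lemma abs_coord_le_norm y i : `|y i| <= n%:R * N y * M (basisv i).
Proof.
have n_gt0 : (0 < n%:R :> R) by rewrite ltr0n dim_gt0.
have yi : y i = n%:R * inner y (basisv i).
  by rewrite inner_basisv mulrA mulfV ?gt_eqF ?mul1r.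
have := inner_le_norm_mul y (basisv i); have := inner_le_norm_mul (- y) (basisv i).
rewrite innerNl (normvN normN) yi normrM ger0_norm ?ler0n // -mulrA ler_pM2l //.
by move=> Ny_le Ny_ge; rewrite ler_norml Ny_ge andbT lerNl.
Qed.

Lemma norm_le_sum_coord y : N y <= \sum_i `|y i| * N (basisv i).
Proof.
rewrite {1}(basisv_expansion y) (le_trans (normv_sum normN _)) //.
by apply: ler_sum => i _; rewrite (normvZ normN).
Qed.

Lemma inner_self_le_norm : exists K, 0 <= K /\ forall y, inner y y <= K * N y ^+ 2.
Proof.
exists (n%:R^-1 * \sum_i (n%:R * M (basisv i)) ^+ 2); split.
  by rewrite mulr_ge0 ?invr_ge0 ?ler0n ?sumr_ge0 // => i _; rewrite sqr_ge0.
move=> y; rewrite innerE /mean -mulrA ler_wpM2l ?invr_ge0 ?ler0n // mulr_suml.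
apply: ler_sum => i _; rewrite -expr2 -exprMn -real_normK ?num_real //.
rewrite lerXn2r ?nnegrE ?normr_ge0 //.
  by rewrite !mulr_ge0 ?ler0n ?(normv_ge0 normM) ?(normv_ge0 normN).
by rewrite mulrAC abs_coord_le_norm.
Qed.

Lemma norm_le_inner_self : exists K, 0 <= K /\ forall y, N y ^+ 2 <= K * inner y y.
Proof.
have n_gt0 : (0 < n%:R :> R) by rewrite ltr0n dim_gt0.
set T := \sum_i N (basisv i) ^+ 2.
have T_gt0 : 0 < T.
  rewrite /T (bigD1 (Ordinal dim_gt0)) //= ltr_pwDl //.
    by rewrite exprn_gt0 // (normv_gt0 normN) // basisv_neq0.
  by rewrite sumr_ge0 // => i _; rewrite sqr_ge0.
exists (n%:R * T); split=> [|y]; first by rewrite mulr_ge0 ?ler0n ?ltW.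
have [Ny0|Ny_neq0] := eqVneq (N y) 0.
  by rewrite Ny0 expr2 mul0r mulr_ge0 ?inner_self_ge0 // mulr_ge0 ?ler0n // ltW.
have Ny_gt0 : 0 < N y by rewrite lt_def Ny_neq0 (normv_ge0 normN).
(* AM-GM with the weight [lam] that makes the resulting bound tight *)
set lam := N y / T.
have lam_gt0 : 0 < lam by rewrite divr_gt0.
have amgm i : `|y i| * N (basisv i) <=
    y i ^+ 2 / (2 * lam) + lam * N (basisv i) ^+ 2 / 2.
  rewrite -[y i ^+ 2]real_normK ?num_real // -subr_ge0.
  have -> : `|y i| ^+ 2 / (2 * lam) + lam * N (basisv i) ^+ 2 / 2 - `|y i| * N (basisv i)
      = (`|y i| - lam * N (basisv i)) ^+ 2 / (2 * lam).
    by field; rewrite gt_eqF.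
  by rewrite divr_ge0 ?sqr_ge0 // mulr_ge0 // ltW.
have := le_trans (norm_le_sum_coord y) (ler_sum _ (fun i _ => amgm i)).
rewrite big_split /= -!mulr_suml -mulr_sumr -/T.
have -> : \sum_i y i ^+ 2 = n%:R * inner y y.
  by rewrite innerE /mean mulrA mulfV ?gt_eqF ?mul1r //; apply: eq_bigr => i _; rewrite expr2.
have -> : lam * T / 2 = N y / 2 by rewrite /lam mulfVK ?gt_eqF.
move=> Ny_le; have : N y / 2 * (2 * lam) <= n%:R * inner y y.
  by rewrite -ler_pdivlMr; [lra | rewrite mulr_gt0].
have -> : N y / 2 * (2 * lam) = N y ^+ 2 / T by rewrite /lam; field; rewrite gt_eqF.
by rewrite ler_pdivrMr // mulrAC.
Qed.

(* Finite-dimensional bipolar theorem: an approximate projection [q] of [h] onto the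
   ball of radius [c] yields a functional [h - q] that [c] cannot dominate. *)
Lemma norm_le_of_inner_le h c :
  0 <= c -> (forall u, inner h u <= c * M u) -> N h <= c.
Proof.
move=> c_ge0 le_c; rewrite leNgt; apply/negP => c_lt.
set delta := N h - c.
have delta_gt0 : 0 < delta by rewrite subr_gt0.
have [L [L_ge0 NL]] := norm_le_inner_self.
have [K [K_ge0 KN]] := inner_self_le_norm.
set e := delta ^+ 2 / (L + 1).
have e_gt0 : 0 < e by rewrite divr_gt0 ?exprn_gt0 // ltr_wpDl.
set ball := [set y | N y <= c]%classic.
have ball0 : ball 0 by rewrite /ball /= normv0.
have [q ball_q proj] : exists2 q, ball q & forall y, ball y -> inner (h - q) (y - q) <= e.
  apply: (approx_projection (W := K * (c + c) ^+ 2)) => //.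
  - by exists 0; exact: ball0.
  - move=> y z s Ny Nz /andP[s_ge0 s_le1]; rewrite /ball /= (le_trans (normvD normN _ _)) //.
    rewrite !(normvZ normN) !ger0_norm ?subr_ge0 //.
    by move: Ny Nz; rewrite /ball /=; nra.
  - move=> y z Ny Nz; apply: (le_trans (KN _)); rewrite ler_wpM2l //.
    have := normvB normN y z; have := normv_ge0 normN (y - z).
    by move: Ny Nz; rewrite /ball /=; nra.
set phi := h - q.
have dual_phi : c * M phi <= inner phi q + e.
  have [c_gt0|c_le0] := ltrP 0 c; last first.
    have -> : c = 0 by apply/le_anti; rewrite c_le0.
    by have := proj 0 ball0; rewrite mul0r innerBr inner0r; lra.
  rewrite -ler_pdivlMl //; apply: dual_norm_le => f Nf; rewrite ler_pdivlMl //.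
  have : ball (c *: f).
    by rewrite /ball /= (normvZ normN) ger0_norm ?(ltW c_gt0) // ler_piMr ?(ltW c_gt0).
  by move/proj; rewrite innerBr innerZr innerC; lra.
have phi_small : inner phi phi <= e.
  have := le_c phi; rewrite -[h in inner h _](subrK q) innerDl -/phi (innerC q); lra.
have phi_large : delta <= N phi.
  by apply: le_trans (normv_lerB normN h q); rewrite lerD2l lerN2.
have := NL phi; have : L * inner phi phi <= L * e by rewrite ler_wpM2l.
have : delta ^+ 2 <= N phi ^+ 2 by rewrite lerXn2r ?nnegrE ?(normv_ge0 normN) ?(ltW delta_gt0).
have : e * (L + 1) = delta ^+ 2 by rewrite /e mulfVK // gt_eqF // ltr_wpDl.
lra.
Qed.

End DualNorm.

(** * The clamp and its polynomial approximations *)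

Section Clamp.
Variables (R : realType) (a b : R).
Hypothesis ab : a < b.
Implicit Types (s t x : R).

Definition clamp t : R := if t < a then a else if b < t then b else t.

(* [clamp_pot] is a primitive of [clamp]: it is convex and [1]-smooth. *)
Definition clamp_pot t : R := t * clamp t - clamp t ^+ 2 / 2.

Lemma clampP t :
  [\/ t < a /\ clamp t = a, a <= t <= b /\ clamp t = t | b < t /\ clamp t = b].
Proof.
rewrite /clamp; case: (ltP t a) => ta; first by constructor 1.
case: (ltP b t) => bt; first by constructor 3.
by constructor 2; split=> //; apply/andP.
Qed.

Lemma clamp_itv t : a <= clamp t <= b.
Proof. by case: (clampP t) => -[tP ->] //; rewrite lexx (ltW ab). Qed.

Lemma clamp_id t : a <= t <= b -> clamp t = t.
Proof. by move=> /andP[a_t t_b]; case: (clampP t) => -[tP ->] //; lra. Qed.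

Lemma clamp_abs t : clamp t = (a + b + `|t - a| - `|t - b|) / 2.
Proof.
have := ab; case: (clampP t) => -[tP ->] a_lt_b.
- by rewrite !ltr0_norm; first field; lra.
- move: tP => /andP[a_t t_b].
  by rewrite ger0_norm ?ler0_norm; first field; lra.
- by rewrite !gtr0_norm; first field; lra.
Qed.

Lemma clamp_pot_lower s t :
  clamp_pot t + clamp t * (s - t) + (clamp s - clamp t) ^+ 2 / 2 <= clamp_pot s.
Proof.
rewrite /clamp_pot; have := clamp_itv s; have := clamp_itv t.
set cs := clamp s; set ct := clamp t => /andP[ct_a ct_b] cs_ab.
suff prod_ge0 : 0 <= (s - cs) * (cs - ct).
  rewrite -subr_ge0; have -> : s * cs - cs ^+ 2 / 2
      - (t * ct - ct ^+ 2 / 2 + ct * (s - t) + (cs - ct) ^+ 2 / 2) = (s - cs) * (cs - ct).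
    by field.
  exact: prod_ge0.
case: (clampP s); rewrite -/cs => -[sP ->].
- by rewrite mulr_le0 //; lra.
- by rewrite subrr mul0r.
- by rewrite mulr_ge0 //; lra.
Qed.

Lemma clamp_pot_upper s t :
  clamp_pot s <= clamp_pot t + clamp t * (s - t) + (s - t) ^+ 2 / 2.
Proof.
have := clamp_pot_lower t s.
have : 0 <= ((clamp s - clamp t) - (s - t)) ^+ 2 / 2 by rewrite divr_ge0 ?sqr_ge0.
nra.
Qed.

Lemma clamp_pot_midpoint s s' :
  clamp_pot ((s + s') / 2) <= (clamp_pot s + clamp_pot s') / 2 - (clamp s - clamp s') ^+ 2 / 8.
Proof.
set m := (s + s') / 2.
have lower_s := clamp_pot_lower s m; have lower_s' := clamp_pot_lower s' m.
have tangent0 : clamp m * (s - m) + clamp m * (s' - m) = 0 by rewrite /m; field.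
have : (clamp s - clamp s') ^+ 2 / 4 <=
    (clamp s - clamp m) ^+ 2 / 2 + (clamp s' - clamp m) ^+ 2 / 2.
  have : 0 <= (clamp s + clamp s' - 2 * clamp m) ^+ 2 / 4 by rewrite divr_ge0 ?sqr_ge0.
  nra.
nra.
Qed.

Lemma clamp_pot_linear_lb x s : a <= x <= b -> - (x ^+ 2 / 2) <= clamp_pot s - x * s.
Proof.
move=> x_ab; have := clamp_pot_lower s x; rewrite /clamp_pot (clamp_id x_ab).
have : 0 <= (clamp s - x) ^+ 2 / 2 by rewrite divr_ge0 ?sqr_ge0.
nra.
Qed.

Lemma clamp_pot0 : clamp_pot 0 <= 0.
Proof. by rewrite /clamp_pot mul0r sub0r oppr_le0 divr_ge0 ?sqr_ge0. Qed.

End Clamp.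

Section AbsApprox.
Variable R : realType.
Implicit Types (e u v x : R).

(* A Heron-type iteration: polynomials in [x] increasing to [`|x|] on [[-1, 1]]. *)
Fixpoint abs_approx (k : nat) x : R :=
  if k is k'.+1 then abs_approx k' x + (x ^+ 2 - abs_approx k' x ^+ 2) / 2 else 0.

Definition abs_approx_deg e : nat := (Num.truncn (2 / e ^+ 2)).+1.

Lemma abs_approx_bounds x k : `|x| <= 1 ->
  0 <= abs_approx k x <= `|x| /\ `|x| - abs_approx k x <= `|x| * (1 - `|x| / 2) ^+ k.
Proof.
move=> x_le1; have x_ge0 := normr_ge0 x.
have sqr_x : x ^+ 2 = `|x| ^+ 2 by rewrite real_normK ?num_real.
elim: k => [|k [/andP[p_ge0 p_le] err]] /=; first by rewrite lexx x_ge0 expr0 mulr1 subr0.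
rewrite sqr_x; set u := `|x| in x_le1 x_ge0 p_le err *; set p := abs_approx k x in p_ge0 p_le err *.
have err_step : u - (p + (u ^+ 2 - p ^+ 2) / 2) = (u - p) * (1 - (u + p) / 2) by field.
have rate_ge0 : 0 <= (1 - u / 2) ^+ k by rewrite exprn_ge0 //; lra.
split; first (apply/andP; split).
- have : 0 <= u ^+ 2 - p ^+ 2 by rewrite subr_ge0 lerXn2r ?nnegrE.
  lra.
- by rewrite -subr_ge0 err_step mulr_ge0 //; lra.
- rewrite err_step exprSr mulrA.
  apply: le_trans (_ : (u - p) * (1 - u / 2) <= _).
    by rewrite ler_wpM2l ?subr_ge0 //; lra.
  by rewrite ler_wpM2r //; lra.
Qed.

Lemma Bernoulli_mul_le1 v k : 0 <= v <= 1 -> (1 - v) ^+ k * (1 + k%:R * v) <= 1.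
Proof.
move=> /andP[v_ge0 v_le1]; elim: k => [|k IH]; first by rewrite expr0 mul1r mul0r addr0.
have pow_ge0 : 0 <= (1 - v) ^+ k by rewrite exprn_ge0 // subr_ge0.
rewrite exprSr -mulrA; apply: le_trans IH; rewrite ler_wpM2l // -natr1.
have : 0 <= k%:R * v ^+ 2 by rewrite mulr_ge0 ?ler0n ?sqr_ge0.
nra.
Qed.

Lemma abs_approx_err e x : 0 < e <= 1 -> `|x| <= 1 ->
  `|x| - abs_approx (abs_approx_deg e) x <= e.
Proof.
move=> /andP[e_gt0 e_le1] x_le1; set k := abs_approx_deg e.
have [_ err] := abs_approx_bounds k x_le1; apply: le_trans err _.
set u := `|x| in x_le1 *; have u_ge0 : 0 <= u := normr_ge0 x.
have rate_le1 : (1 - u / 2) ^+ k <= 1 by rewrite exprn_ile1 //; lra.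
have [u_le|e_lt] := lerP u e.
  by apply: le_trans (_ : u * 1 <= _); [rewrite ler_wpM2l | rewrite mulr1].
apply: le_trans (_ : 1 * (1 - e / 2) ^+ k <= _).
  by rewrite ler_pM // ?exprn_ge0 ?lerXn2r ?nnegrE //; lra.
have half_e : 0 <= e / 2 <= 1 by apply/andP; split; lra.
have pow_ge0 : 0 <= (1 - e / 2) ^+ k by rewrite exprn_ge0 //; lra.
have inv_e : e^-1 <= 1 + k%:R * (e / 2).
  have k_gt : 2 / e ^+ 2 < k%:R by apply: truncnS_gt.
  have -> : e^-1 = 2 / e ^+ 2 * (e / 2) by field; rewrite gt_eqF.
  have : 2 / e ^+ 2 * (e / 2) <= k%:R * (e / 2) by rewrite ler_pM2r ?divr_gt0 // ltW.
  lra.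
rewrite mul1r -[leRHS]mul1r -ler_pdivrMr //.
exact: le_trans (ler_wpM2l pow_ge0 inv_e) (Bernoulli_mul_le1 k half_e).
Qed.

Fixpoint abs_approx_bound (k : nat) : R :=
  if k is k'.+1 then abs_approx_bound k' + (1 + abs_approx_bound k' ^+ 2) / 2 else 0.

Lemma abs_approx_bound_ge0 k : 0 <= abs_approx_bound k.
Proof.
by elim: k => [|k IH] //=; rewrite addr_ge0 // divr_ge0 // addr_ge0 ?sqr_ge0.
Qed.

End AbsApprox.

Lemma shrink_toward_center (R : realType) (h e d dc : R) :
  0 < h -> `|dc| <= h -> `|d - dc| <= e ->
  `|h / (h + e) * d| <= h /\ `|h / (h + e) * d - dc| <= 2 * e.
Proof.
move=> h_gt0 dc_le d_close.
have e_ge0 : 0 <= e := le_trans (normr_ge0 _) d_close.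
have he_gt0 : 0 < h + e by lra.
set lam := h / (h + e).
have lam_ge0 : 0 <= lam by rewrite divr_ge0 ?ltW.
have lam_le1 : lam <= 1 by rewrite /lam ler_pdivrMr // mul1r; lra.
have d_le : `|d| <= h + e by have := ler_normD (d - dc) dc; rewrite subrK; lra.
have lam_he : lam * (h + e) = h by rewrite /lam mulfVK ?gt_eqF.
split; first by rewrite normrM ger0_norm // -[leRHS]lam_he ler_wpM2l.
have -> : lam * d - dc = (d - dc) - (1 - lam) * d by ring.
rewrite (le_trans (ler_normB _ _)) // normrM (ger0_norm (_ : 0 <= 1 - lam)); last lra.
have : (1 - lam) * `|d| <= (1 - lam) * (h + e) by rewrite ler_wpM2l //; lra.
lra.
Qed.

Section ClampPoly.
Variables (R : realType) (a b : R).
Hypothesis ab : a < b.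

(* [clamp a b t = (a + b + |t - a| - |t - b|) / 2] with both absolute values replaced by
   [abs_approx] at scale [r], shrunk toward [(a + b) / 2] to stay inside [[a, b]]. *)
Definition clamp_poly (r e t : R) : R :=
  (a + b) / 2 + (b - a) / 2 / ((b - a) / 2 + r * e) *
    (r * (abs_approx (abs_approx_deg e) ((t - a) / r)
          - abs_approx (abs_approx_deg e) ((t - b) / r)) / 2).

Lemma clamp_poly_spec r e t : 0 < r -> 0 < e <= 1 -> `|t - a| <= r -> `|t - b| <= r ->
  a <= clamp_poly r e t <= b /\ `|clamp_poly r e t - clamp a b t| <= 2 * (r * e).
Proof.
move=> r_gt0 e01 ta_le tb_le; rewrite /clamp_poly.
set p := abs_approx (abs_approx_deg e); set h := (b - a) / 2.
have h_gt0 : 0 < h by rewrite divr_gt0 // subr_gt0.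
have scaled c : `|t - c| <= r -> `|(t - c) / r| <= 1 /\ `|t - c| = r * `|(t - c) / r|.
  move=> tc_le; rewrite normrM (gtr0_norm (_ : 0 < r^-1)) ?invr_gt0 //.
  rewrite mulrCA mulfV ?gt_eqF // mulr1.
  by split=> //; rewrite ler_pdivrMr ?mul1r.
have [ua ea] := scaled a ta_le; have [ub eb] := scaled b tb_le.
have [/andP[_ pa_le] _] : 0 <= p ((t - a) / r) <= _ /\ _ := abs_approx_bounds _ ua.
have [/andP[_ pb_le] _] : 0 <= p ((t - b) / r) <= _ /\ _ := abs_approx_bounds _ ub.
have erra : _ - p ((t - a) / r) <= e := abs_approx_err e01 ua.
have errb : _ - p ((t - b) / r) <= e := abs_approx_err e01 ub.
set d := r * (p ((t - a) / r) - p ((t - b) / r)) / 2.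
set dc := clamp a b t - (a + b) / 2.
have dc_le : `|dc| <= h.
  have := clamp_itv ab t => /andP[? ?].
  by rewrite ler_norml; apply/andP; split; rewrite /dc /h; lra.
have d_close : `|d - dc| <= r * e.
  rewrite /d /dc (clamp_abs ab) ea eb.
  set u1 := `|(t - a) / r| in pa_le erra *; set u2 := `|(t - b) / r| in pb_le errb *.
  set p1 := p ((t - a) / r) in pa_le erra *; set p2 := p ((t - b) / r) in pb_le errb *.
  have -> : r * (p1 - p2) / 2 - ((a + b + r * u1 - r * u2) / 2 - (a + b) / 2)
      = r * ((p1 - u1) - (p2 - u2)) / 2 by field.
  rewrite !normrM (gtr0_norm r_gt0) (ger0_norm (_ : 0 <= 2^-1)) ?invr_ge0 //.
  have : `|p1 - u1 - (p2 - u2)| <= e by rewrite ler_norml; apply/andP; split; lra.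
  by move: e01 => /andP[e_gt0 _]; nra.
have [in_itv close] := shrink_toward_center h_gt0 dc_le d_close.
split; last by rewrite (_ : _ - clamp a b t = h / (h + r * e) * d - dc) // /dc; ring.
move: in_itv; rewrite ler_norml => /andP[lo hi].
by apply/andP; split; rewrite /h in lo hi *; lra.
Qed.

End ClampPoly.

Definition vmap (R : realType) (n : nat) (F : R -> R) (v : vec R n) : vec R n :=
  [ffun i => F (v i)].

Section AlgebraNormBounds.
Variables (R : realType) (n : nat) (N : vec R n -> R).
Hypothesis algM : is_algebra_norm (dual_norm N).
Local Notation M := (dual_norm N).
Let normM := dual_norm_is_norm algM.
Implicit Types (v x : vec R n).

Lemma dual_norm_abs_approx k x : M x <= 1 -> M (vmap (abs_approx k) x) <= abs_approx_bound R k.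
Proof.
move=> Mx_le1; elim: k => [|k IH] /=.
  by rewrite (_ : vmap _ x = 0) ?normv0 //; apply/ffunP => i; rewrite !ffunE.
set P := vmap (abs_approx k) x.
have -> : vmap (abs_approx k.+1) x = P + 2^-1 *: (vmul x x - vmul P P).
  by apply/ffunP => i; rewrite vecDE vecZE vecBE !ffunE /=; field.
apply: le_trans (normvD normM _ _) _.
rewrite (normvZ normM) ger0_norm ?invr_ge0 //.
have := normvB normM (vmul x x) (vmul P P).
have := dual_normM algM x x; have := dual_normM algM P P.
have := normv_ge0 normM x; have := normv_ge0 normM P; have := abs_approx_bound_ge0 R k.
move: IH Mx_le1; set m := abs_approx_bound R k; nra.
Qed.

Lemma dual_norm_clamp_poly a b r e v : a < b -> 0 < r -> 0 < e -> M v + `|a| + `|b| <= r ->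
  M (vmap (clamp_poly a b r e) v) <= `|(a + b) / 2| + r * abs_approx_bound R (abs_approx_deg e).
Proof.
move=> ab r_gt0 e_gt0 Mv_le.
pose h := (b - a) / 2; pose lam := h / (h + r * e); pose p := @abs_approx R (abs_approx_deg e).
have h_gt0 : 0 < h by rewrite divr_gt0 // subr_gt0.
have re_ge0 : 0 <= r * e by rewrite mulr_ge0 // ltW.
have lam_ge0 : 0 <= lam by apply: divr_ge0; [exact: ltW | rewrite addr_ge0 // ltW].
have lam_le1 : lam <= 1 by rewrite ler_pdivrMr ?mul1r ?lerDl // ltr_wpDr.
have coef_ge0 : 0 <= lam * r / 2.
  by apply: mulr_ge0; [apply: mulr_ge0 => //; exact: ltW | rewrite invr_ge0].
pose shift := fun c => r^-1 *: (v - c *: vone R n).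
have M_shift c : `|c| <= `|a| + `|b| -> M (shift c) <= 1.
  move=> c_le; rewrite (normvZ normM) gtr0_norm ?invr_gt0 // mulrC ler_pdivrMr // mul1r.
  apply: le_trans (normvB normM _ _) _.
  by rewrite (normvZ normM) (dual_norm1 algM) mulr1; lra.
have -> : vmap (clamp_poly a b r e) v =
    (a + b) / 2 *: vone R n + (lam * r / 2) *: (vmap p (shift a) - vmap p (shift b)).
  apply/ffunP => i; rewrite /clamp_poly !(vecDE, vecBE, vecZE, ffunE) !mulr1.
  by rewrite ![r^-1 * _]mulrC /lam /h /p; ring.
have M_p c : `|c| <= `|a| + `|b| -> M (vmap p (shift c)) <= abs_approx_bound R (abs_approx_deg e).
  by move=> c_le; apply: dual_norm_abs_approx; apply: M_shift.
have M_diff : M (vmap p (shift a) - vmap p (shift b)) <=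
    abs_approx_bound R (abs_approx_deg e) + abs_approx_bound R (abs_approx_deg e).
  apply: le_trans (normvB normM _ _) _; apply: lerD; apply: M_p.
    by rewrite lerDl normr_ge0.
  by rewrite lerDr normr_ge0.
apply: le_trans (normvD normM _ _) _.
rewrite !(normvZ normM) (dual_norm1 algM) mulr1 lerD2l.
rewrite (ger0_norm coef_ge0); apply: le_trans (ler_wpM2l coef_ge0 M_diff) _.
have : 0 <= r * abs_approx_bound R (abs_approx_deg e).
  by rewrite mulr_ge0 ?abs_approx_bound_ge0 // ltW.
set m := abs_approx_bound R _; nra.
Qed.

End AlgebraNormBounds.

(** * The penalised variational problem *)

Section Variational.
Variables (R : realType) (n : nat) (N : vec R n -> R) (a b : R) (f : vec R n).
Hypotheses (normN : is_norm N) (algM : is_algebra_norm (dual_norm N)).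
Hypotheses (ab : a < b) (f_ab : takes_values_in a b f).
Local Notation M := (dual_norm N).
Let normM := dual_norm_is_norm algM.
Implicit Types (d : R) (psi u : vec R n).

(* The gradient of [energy] at [psi] is [vmap (clamp a b) psi - f]. *)
Definition energy psi : R := mean (fun i => clamp_pot a b (psi i) - f i * psi i).
Definition penalized d psi : R := energy psi + d * M psi.
Definition min_value d : R := inf [set penalized d psi | psi in [set: vec R n]]%classic.

Local Notation B := (`|a| + `|b|).

Lemma energy_lb psi : - (B ^+ 2 / 2) <= energy psi.
Proof.
rewrite -[leLHS](mean_cst _ (dim_gt0 algM)); apply: ler_mean => i.
have /andP[f_a f_b] := f_ab i.
have := clamp_pot_linear_lb ab (psi i) (f_ab i).
have : f i <= B by have := ler_norm b; have := normr_ge0 a; lra.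
have : - B <= f i by have := ler_norm (- a); have := normr_ge0 b; rewrite normrN; lra.
nra.
Qed.

Lemma penalized_lb d psi : 0 <= d -> - (B ^+ 2 / 2) <= penalized d psi.
Proof.
move=> d_ge0; have := energy_lb psi.
have : 0 <= d * M psi by rewrite mulr_ge0 ?(normv_ge0 normM).
rewrite /penalized; lra.
Qed.

Lemma penalized0 d : penalized d 0 <= 0.
Proof.
rewrite /penalized (normv0 normM) mulr0 addr0 -(mean_cst 0 (dim_gt0 algM)).
by apply: ler_mean => i; rewrite ffunE mulr0 subr0 clamp_pot0.
Qed.

Lemma min_value_le d psi : 0 <= d -> min_value d <= penalized d psi.
Proof.
move=> d_ge0; apply: ge_inf; last by exists psi.
by exists (- (B ^+ 2 / 2)) => _ [phi _ <-]; exact: penalized_lb.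
Qed.

Lemma min_value_ge d : 0 <= d -> - (B ^+ 2 / 2) <= min_value d.
Proof.
move=> d_ge0; apply: lb_le_inf; first by exists (penalized d 0), 0.
by move=> _ [psi _ <-]; exact: penalized_lb.
Qed.

Lemma min_value_le0 d : 0 <= d -> min_value d <= 0.
Proof. by move=> d_ge0; apply: le_trans (min_value_le 0 d_ge0) (penalized0 d). Qed.

Lemma near_minimizer d tau : 0 <= d -> 0 < tau ->
  exists psi, penalized d psi <= min_value d + tau.
Proof.
move=> d_ge0 tau_gt0.
have inf_ex : has_inf [set penalized d psi | psi in [set: vec R n]]%classic.
  split; first by exists (penalized d 0), 0.
  by exists (- (B ^+ 2 / 2)) => _ [psi _ <-]; exact: penalized_lb.
by have [_ [psi _ <-] /ltW] := inf_adherent tau_gt0 inf_ex; exists psi.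
Qed.

Lemma near_minimizer_dual_norm d psi : 0 < d ->
  penalized d psi <= min_value d + d ^+ 2 / 2 -> M psi <= (d ^+ 2 + B ^+ 2) / (2 * d).
Proof.
move=> d_gt0 near; have := min_value_le0 (ltW d_gt0); have := energy_lb psi.
by move: near; rewrite /penalized ler_pdivlMr ?mulr_gt0 //; nra.
Qed.

Lemma energy_step psi u d : energy (psi + d *: u) - energy psi <=
  - d * inner (f - vmap (clamp a b) psi) u + d ^+ 2 / 2 * inner u u.
Proof.
rewrite /energy -meanB !innerE -!meanZ -meanD; apply: ler_mean => i.
rewrite !(vecDE, vecBE, vecZE, ffunE).
have := clamp_pot_upper ab (psi i + d * u i) (psi i).
rewrite (_ : psi i + d * u i - psi i = d * u i); last by ring.
have -> : - d * ((f i - clamp a b (psi i)) * u i) + d ^+ 2 / 2 * (u i * u i)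
  = clamp a b (psi i) * (d * u i) + (d * u i) ^+ 2 / 2 - f i * (d * u i) by ring.
have -> : clamp_pot a b (psi i + d * u i) - f i * (psi i + d * u i)
    - (clamp_pot a b (psi i) - f i * psi i)
  = clamp_pot a b (psi i + d * u i) - clamp_pot a b (psi i) - f i * (d * u i) by ring.
lra.
Qed.

Lemma near_minimizer_residual d psi : 0 < d ->
  penalized d psi <= min_value d + d ^+ 2 / 2 -> N (f - vmap (clamp a b) psi) <= 2 * d.
Proof.
move=> d_gt0 near; set h := f - vmap (clamp a b) psi.
(* testing the near-minimality against [psi + d u] for a unit direction [u] *)
have unit_dir u : M u = 1 -> inner h u <= 2 * d.
  move=> Mu1; have := min_value_le (psi + d *: u) (ltW d_gt0).
  have := energy_step psi u d.
  have : d * M (psi + d *: u) <= d * M psi + d * d.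
    rewrite -mulrDr; apply: ler_wpM2l; first exact: ltW.
    by rewrite (le_trans (normvD normM _ _)) // (normvZ normM) Mu1 mulr1 gtr0_norm.
  have : inner u u <= 1 by have := inner_self_le_dual_norm algM u; rewrite Mu1 expr1n.
  have : 0 <= d ^+ 2 / 2 by rewrite divr_ge0 ?sqr_ge0.
  move: near; rewrite /penalized -/h => near sq2_ge0 uu_le1 M_step E_step V_le.
  have : d ^+ 2 / 2 * inner u u <= d ^+ 2 / 2 by rewrite -[leRHS]mulr1 ler_wpM2l.
  rewrite expr2 in near E_step *; move=> uu_step.
  by rewrite -(ler_pM2l d_gt0); lra.
apply: norm_le_of_inner_le => //; first by rewrite mulr_ge0 // ltW.
move=> u; have [Mu0|Mu_neq0] := eqVneq (M u) 0.
  by rewrite (normv_eq0 normM Mu0) inner0r (normv0 normM) mulr0.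
have Mu_gt0 : 0 < M u by rewrite lt_def Mu_neq0 (normv_ge0 normM).
have := unit_dir ((M u)^-1 *: u).
rewrite innerZr (normvZ normM) ger0_norm ?invr_ge0 ?(ltW Mu_gt0) // mulVf // => /(_ erefl).
by rewrite ler_pdivrMl // mulrC.
Qed.

Lemma energy_midpoint psi psi' (c := vmap (clamp a b) psi - vmap (clamp a b) psi') :
  energy (2^-1 *: (psi + psi')) <= 2^-1 * (energy psi + energy psi') - 8^-1 * inner c c.
Proof.
rewrite /energy innerE -meanD -!meanZ -meanB; apply: ler_mean => i.
rewrite /c !(vecDE, vecBE, vecZE, ffunE).
have := clamp_pot_midpoint ab (psi i) (psi' i); rewrite [(psi i + psi' i) / 2]mulrC.
have -> : f i * (2^-1 * (psi i + psi' i)) = 2^-1 * (f i * psi i + f i * psi' i) by ring.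
lra.
Qed.

(* Compare both near-minimisers with their midpoint, using the strong convexity of
   [clamp_pot] in the clamp (clamp_pot_midpoint). *)
Lemma near_minimizers_close d d' psi psi' tau tau' th
  (c := vmap (clamp a b) psi - vmap (clamp a b) psi') :
  0 < d' -> d' <= d ->
  penalized d psi <= min_value d + tau -> penalized d' psi' <= min_value d' + tau' ->
  min_value d - min_value d' <= th -> inner c c <= 4 * (th + tau + tau').
Proof.
move=> d'_gt0 d'_le near near' gap.
have := min_value_le (2^-1 *: (psi + psi')) (ltW d'_gt0).
have := energy_midpoint psi psi'.
have : M (2^-1 *: (psi + psi')) <= 2^-1 * (M psi + M psi').
  by rewrite (normvZ normM) ger0_norm ?invr_ge0 // ler_wpM2l ?invr_ge0 // normvD.
move: near near'; rewrite /penalized => near near' M_mid E_mid V_mid.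
have : d' * M psi <= d * M psi by rewrite ler_wpM2r // (normv_ge0 normM).
have : d' * M (2^-1 *: (psi + psi')) <= d' * (2^-1 * (M psi + M psi')).
  by rewrite ler_wpM2l // ltW.
have := inner_self_ge0 c.
lra.
Qed.

End Variational.

(** * The decomposition *)

Section Decomposition.
Variables (R : realType) (a b eps : R).
Hypotheses (ab : a < b) (eps_gt0 : 0 < eps).
Local Notation B := (`|a| + `|b|).

(* [approx_radius d] bounds [|t - a|] and [|t - b|] on the coordinates of the
   near-minimisers at cost [d], and [approx_tol d] makes [clamp_poly] [eps / 2]-accurate. *)
Definition approx_radius d : R := (d ^+ 2 + B ^+ 2) / (2 * d) + B + 1.
Definition approx_tol d : R := eps / (4 * approx_radius d + eps).
Definition decomp_cost d : R :=
  `|(a + b) / 2| + approx_radius d * abs_approx_bound R (abs_approx_deg (approx_tol d)).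

Lemma approx_radius_gt0 d : 0 < d -> 0 < approx_radius d.
Proof.
move=> d_gt0; rewrite /approx_radius -addrA ltr_wpDl ?ltr_pwDr //.
  by rewrite divr_ge0 ?addr_ge0 ?sqr_ge0 // mulr_ge0 // ltW.
by rewrite addr_ge0.
Qed.

Lemma approx_tol_spec d : 0 < d ->
  0 < approx_tol d <= 1 /\ 2 * (approx_radius d * approx_tol d) <= eps / 2.
Proof.
move=> d_gt0; have r_gt0 := approx_radius_gt0 d_gt0.
have den_gt0 : 0 < 4 * approx_radius d + eps by rewrite ltr_wpDl // mulr_ge0 // ltW.
split; first by rewrite /approx_tol divr_gt0 // ler_pdivrMr // mul1r lerDr mulr_ge0 // ltW.
rewrite /approx_tol; set r := approx_radius d in den_gt0 *.
have -> : 2 * (r * (eps / (4 * r + eps))) = eps / 2 - eps ^+ 2 / (2 * (4 * r + eps)).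
  by field; rewrite gt_eqF.
by rewrite lerBlDr lerDl divr_ge0 ?sqr_ge0 // mulr_ge0 // ltW.
Qed.

Lemma decomp_cost_ge0 d : 0 < d -> 0 <= decomp_cost d.
Proof.
move=> d_gt0; rewrite addr_ge0 // mulr_ge0 ?abs_approx_bound_ge0 //.
exact: ltW (approx_radius_gt0 d_gt0).
Qed.

Variables (n : nat) (N : vec R n -> R) (f : vec R n).
Hypotheses (normN : is_norm N) (algM : is_algebra_norm (dual_norm N)).
Hypothesis f_ab : takes_values_in a b f.
Local Notation M := (dual_norm N).
Local Notation V := (min_value N a b f).

Lemma clamp_poly_near_clamp psi d (r := approx_radius d) (e := approx_tol d) :
  0 < d -> M psi <= (d ^+ 2 + B ^+ 2) / (2 * d) ->
  takes_values_in a b (vmap (clamp_poly a b r e) psi) /\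
  inner (vmap (clamp a b) psi - vmap (clamp_poly a b r e) psi)
        (vmap (clamp a b) psi - vmap (clamp_poly a b r e) psi) <= (eps / 2) ^+ 2.
Proof.
move=> d_gt0 Mpsi; have r_gt0 : 0 < r := approx_radius_gt0 d_gt0.
have [e01 re_le] := approx_tol_spec d_gt0.
have spec i := clamp_poly_spec (t := psi i) ab r_gt0 e01.
have coord c i : `|c| <= B -> `|psi i - c| <= r.
  move=> c_le; rewrite (le_trans (ler_normB _ _)) // /r /approx_radius.
  by have := le_trans (abs_coord_le_dual_norm algM psi i) Mpsi; lra.
have near i : a <= clamp_poly a b r e (psi i) <= b /\
    `|clamp_poly a b r e (psi i) - clamp a b (psi i)| <= 2 * (r * e).
  by apply: spec; apply: coord; rewrite ?lerDl ?lerDr.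
split=> [i|]; first by rewrite ffunE; case: (near i).
rewrite innerE -[leRHS](mean_cst _ (dim_gt0 algM)); apply: ler_mean => i.
rewrite vecBE !ffunE -expr2 (le_trans (ler_norm _)) // normrX distrC.
have [_ close] := near i; rewrite lerXn2r ?nnegrE ?normr_ge0 ?(le_trans close) //.
by rewrite divr_ge0 // ltW.
Qed.

Lemma decomposition_at_scales d d' : 0 < d' -> d' <= d -> d <= eps / 8 ->
  V d - V d' <= eps ^+ 2 / 32 ->
  exists f1 f2 f3 : vec R n,
    f = f1 + f2 + f3 /\ [/\ M f1 <= decomp_cost d, N f2 <= 2 * d', l2norm f3 <= eps,
                           takes_values_in a b f1 & takes_values_in a b (f1 + f3)].
Proof.
move=> d'_gt0 d'_le d_le gap; have d_gt0 : 0 < d := lt_le_trans d'_gt0 d'_le.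
have tau_gt0 (c : R) : 0 < c -> 0 < c ^+ 2 / 2 by move=> c_gt0; rewrite divr_gt0 ?exprn_gt0.
have [psi near] := near_minimizer algM ab f_ab (ltW d_gt0) (tau_gt0 _ d_gt0).
have [psi' near'] := near_minimizer algM ab f_ab (ltW d'_gt0) (tau_gt0 _ d'_gt0).
have Mpsi := near_minimizer_dual_norm algM ab f_ab d_gt0 near.
have [f1_ab f1_close] := clamp_poly_near_clamp d_gt0 Mpsi.
set f1 := vmap (clamp_poly a b _ _) psi in f1_ab f1_close.
exists f1, (f - vmap (clamp a b) psi'), (vmap (clamp a b) psi' - f1); split.
  by apply/ffunP => i; rewrite !(vecBE, vecDE); ring.
split.
- apply: le_trans (dual_norm_clamp_poly algM ab _ _ _) _.
  + exact: approx_radius_gt0.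
  + by case: (approx_tol_spec d_gt0) => /andP[].
  + by move: Mpsi; rewrite /approx_radius; lra.
  + by [].
- by have := near_minimizer_residual normN algM ab f_ab d'_gt0 near'.
- have := near_minimizers_close algM ab f_ab d'_gt0 d'_le near near' gap.
  set c := _ - _ => c_close.
  have -> : vmap (clamp a b) psi' - f1 = (vmap (clamp a b) psi - f1) - c.
    by apply/ffunP => i; rewrite !vecBE; ring.
  have := inner_self_subr_le (vmap (clamp a b) psi - f1) c.
  have : d ^+ 2 / 2 <= eps ^+ 2 / 128 by have := ltW d_gt0; nra.
  have : d' ^+ 2 / 2 <= eps ^+ 2 / 128 by have := ltW d'_gt0; nra.
  move: f1_close c_close => f1_close c_close tau_le tau'_le sq_le.
  have half_sq : (eps / 2) ^+ 2 = eps ^+ 2 / 4 by field.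
  rewrite half_sq in f1_close; rewrite /l2norm -(ger0_norm (ltW eps_gt0)) -sqrtr_sqr.
  by rewrite ler_wsqrtr //; apply: le_trans sq_le _; nra.
- exact: f1_ab.
- by move=> i; rewrite vecDE vecBE addrC subrK ffunE (clamp_itv ab).
Qed.

End Decomposition.

Lemma exists_small_decrement (R : realType) (V : nat -> R) (lo th : R) (J : nat) :
  V 0 <= 0 -> (forall j, lo <= V j) -> - lo < J%:R * th ->
  exists2 j, (j < J)%N & V j - V j.+1 <= th.
Proof.
move=> V0_le V_ge J_large; apply: contrapT => no_small.
have big_drop j : (j < J)%N -> th < V j - V j.+1.
  by move=> j_lt; rewrite ltNge; apply/negP => small; apply: no_small; exists j.
have drop k : (k <= J)%N -> V k <= V 0 - k%:R * th.
  elim: k => [|k IH] k_le; first by rewrite mul0r subr0.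
  by have := big_drop k k_le; have := IH (ltnW k_le); rewrite -natr1; lra.
by have := drop J (leqnn J); have := V_ge J; lra.
Qed.

Section Scales.
Variables (R : realType) (eta cost : R -> R) (d0 : R).
Hypotheses (eta_pos : forall x, 0 <= x -> 0 < eta x) (cost_ge0 : forall d, 0 < d -> 0 <= cost d).
Hypothesis d0_gt0 : 0 < d0.

(* Each scale is small enough for the residual bound [2 d_(j+1)] to meet the threshold
   [eta] of the cost of the previous scale. *)
Definition scale (j : nat) : R := iter j (fun d => Num.min d (eta (cost d) / 2)) d0.

Lemma scale_gt0 j : 0 < scale j.
Proof.
elim: j => [|j IH] //=; rewrite lt_min IH /= divr_gt0 //.
by apply: eta_pos; apply: cost_ge0.
Qed.

Lemma scaleS_le j : scale j.+1 <= scale j.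
Proof. by rewrite /= ge_min lexx. Qed.

Lemma scale_le_start j : scale j <= d0.
Proof. by elim: j => [|j IH]; rewrite ?lexx // (le_trans (scaleS_le j)). Qed.

Lemma scaleS_eta j : 2 * scale j.+1 <= eta (cost (scale j)).
Proof.
have : scale j.+1 <= eta (cost (scale j)) / 2 by rewrite /= ge_min lexx orbT.
lra.
Qed.

End Scales.

Theorem theorem5p1 (R : realType) (a b : R) (hab : a < b)
  (eta : R -> R)
  (eta_pos : forall x, 0 <= x -> 0 < eta x)
  (eta_decr : forall x y, 0 <= x -> x <= y -> eta y <= eta x)
  (eps : R) (heps : 0 < eps) :
  exists C0 : R, forall (n : nat) (N : vec R n -> R),
    is_norm N -> is_algebra_norm (dual_norm N) ->
    forall f : vec R n, takes_values_in a b f ->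
    exists f1 f2 f3 : vec R n,
      f = vadd (vadd f1 f2) f3 /\
      dual_norm N f1 <= C0 /\
      N f2 <= eta (dual_norm N f1) /\
      l2norm f3 <= eps /\
      takes_values_in a b f1 /\
      takes_values_in a b (vadd f1 f3).
Proof.
pose cost := decomp_cost a b eps; pose th := eps ^+ 2 / 32.
have cost_ge0 (d : R) : 0 < d -> 0 <= cost d := @decomp_cost_ge0 _ a b eps d.
pose d := scale eta cost (eps / 8).
have d_gt0 j : 0 < d j by apply: scale_gt0 => //; rewrite divr_gt0.
pose J := (Num.truncn ((`|a| + `|b|) ^+ 2 / 2 / th)).+1.
exists (\sum_(j < J) cost (d j)) => n N normN algM f f_ab.
have [j j_lt gap] : exists2 j, (j < J)%N &
    min_value N a b f (d j) - min_value N a b f (d j.+1) <= th.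
  apply: (exists_small_decrement (V := fun k => min_value N a b f (d k))
                                 (lo := - ((`|a| + `|b|) ^+ 2 / 2))).
  - by have := min_value_le0 algM hab f_ab (ltW (d_gt0 0)).
  - by move=> k; have := min_value_ge algM hab f_ab (ltW (d_gt0 k)).
  - by rewrite opprK -ltr_pdivrMr ?divr_gt0 ?exprn_gt0 // truncnS_gt.
have [f1 [f2 [f3 [-> [Mf1 Nf2 f3_l2 f1_ab f13_ab]]]]] :=
  decomposition_at_scales hab heps normN algM f_ab (d_gt0 j.+1) (scaleS_le _ _ _ _)
    (scale_le_start _ _ _ _) gap.
exists f1, f2, f3; split=> //; split.
  rewrite (le_trans Mf1) // (bigD1 (Ordinal j_lt)) //= lerDl.
  by rewrite sumr_ge0 // => i _; apply: cost_ge0.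
split=> //; apply: le_trans Nf2 (le_trans (scaleS_eta _ _ _ _) _).
by apply: eta_decr => //; exact: normv_ge0 (dual_norm_is_norm algM) f1.
Qed.
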